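(* Let $G$ be a graph on which a vertex-edge marking game $\mathcal G$ is being played, and let $n\ge 0$ be an integer. If at some round it is Bob's turn and there is an $n$-free path in $G$, then Bob has a strategy forcing the final score of $\mathcal G$ to be at least $n+3$.
   Context: The vertex-edge marking game on a graph $G=(V,E)$ (finite or infinite) is played by Alice, who marks vertices, and Bob, who marks edges. Initially nothing is marked. The game proceeds in rounds $r=1,2,\dots$; in each round Alice first marks one unmarked vertex, then Bob marks one unmarked edge. For a finite graph the game ends when either player has no move; for an infinite graph it continues forever. After round $r$, the vertex score of $v$ is $0$ if $v$ is marked, and otherwise the number of marked edges incident to $v$. The $r$-round score is the supremum over $v\in V$ of the vertex scores after round $r$, and the final score of the game is the supremum of the $r$-round scores over all rounds. In a position of the game, an $n$-free path is a path $P$ in $G$ with vertex sequence $v_0,\dots,v_k$, $k\ge 2$, such that: the first and last edges $v_0v_1$ and $v_{k-1}v_k$ are marked; the interior vertices $v_1,\dots,v_{k-1}$ are unmarked; and each interior vertex is incident to at least $n+1$ edges not in $P$, at least $n$ of which are marked. *)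

From Stdlib Require Import Arith List.
Import ListNotations.

Section Game.
Variable V : Type.
Variable adj : V -> V -> Prop.

(* A whole play from the empty board: in round t (t = 0,1,2,...) Alice marks
   vertex A t, then Bob marks the edge {fst (B t), snd (B t)}. *)

Definition MV (A : nat -> V) (t : nat) (v : V) : Prop :=
  exists i, i < t /\ A i = v.

Definition ME (B : nat -> V * V) (t : nat) (x y : V) : Prop :=
  exists j, j < t /\ (B j = (x, y) \/ B j = (y, x)).

Definition alice_legal (A : nat -> V) (i : nat) : Prop := ~ MV A i (A i).

Definition bob_legal (B : nat -> V * V) (j : nat) : Prop :=
  adj (fst (B j)) (snd (B j)) /\ ~ ME B j (fst (B j)) (snd (B j)).

Definition vertex_score_ge (mv : V -> Prop) (me : V -> V -> Prop) (v : V) (m : nat) : Prop :=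
  ~ mv v /\ exists l : list V, NoDup l /\ length l = m /\ Forall (fun u => me v u) l.

Definition score_ge (mv : V -> Prop) (me : V -> V -> Prop) (m : nat) : Prop :=
  exists v, vertex_score_ge mv me v m.

(* Plays in which Alice
   makes an illegal move although a legal one was available are not genuine
   plays and are discarded (second disjunct). *)
Definition final_score_ge (A : nat -> V) (B : nat -> V * V) (m : nat) : Prop :=
  exists k,
    (forall i, i <= k -> alice_legal A i) /\
    (forall j, j <= k -> bob_legal B j) /\
    ( score_ge (MV A (S k)) (ME B (S k)) m \/
      (~ alice_legal A (S k) /\ exists v, ~ MV A (S k) v) ).

Definition n_free_path (mv : V -> Prop) (me : V -> V -> Prop) (n : nat) : Prop :=
  exists (p : nat -> V) (k : nat),
    2 <= k /\
    (forall i j, i <= k -> j <= k -> p i = p j -> i = j) /\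
    (forall i, i < k -> adj (p i) (p (S i))) /\
    me (p 0) (p 1) /\ me (p (k - 1)) (p k) /\
    (forall i, 0 < i < k ->
       ~ mv (p i) /\
       (exists l : list V, NoDup l /\ length l = S n /\
          Forall (fun u => adj (p i) u /\ u <> p (i - 1) /\ u <> p (S i)) l) /\
       (exists l : list V, NoDup l /\ length l = n /\
          Forall (fun u => adj (p i) u /\ me (p i) u /\ u <> p (i - 1) /\ u <> p (S i)) l)).

(* Play obtained from a history (Alice moves pa 0..pa r, Bob moves pb 0..pb (r-1)),
   continued by Bob's strategy sigma (a function of Alice's moves after the
   history) and Alice's subsequent moves c 0, c 1, ... *)
Definition play_A (r : nat) (pa : nat -> V) (c : nat -> V) (t : nat) : V :=
  if Nat.leb t r then pa t else c (t - S r).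

Definition play_B (r : nat) (pb : nat -> V * V) (sigma : list V -> V * V)
  (c : nat -> V) (t : nat) : V * V :=
  if Nat.ltb t r then pb t else sigma (map c (seq 0 (t - r))).

End Game.

Arguments MV {V}.
Arguments ME {V}.
Arguments alice_legal {V}.
Arguments bob_legal {V}.
Arguments vertex_score_ge {V}.
Arguments score_ge {V}.
Arguments final_score_ge {V}.
Arguments n_free_path {V}.
Arguments play_A {V}.
Arguments play_B {V}.

(* Bob plays at the first interior vertex p1 of the path. It is unmarked and has
   n+3 neighbours (p0, p2 and n+1 off-path ones), of which p0 and n off-path ones
   are joined to it by marked edges. If p1p2 is marked too, Bob marks one more
   edge at p1, or the score n+3 has already been reached. Otherwise Bob marks
   p1p2: unless Alice answers by marking p1, the previous case applies one round
   later; if she does, p1, ..., pk is a shorter n-free path of the new position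
   (it still has two edges, since p(k-1)pk was marked and p1p2 was not). *)

From Stdlib Require Import Arith List Lia.
From Stdlib Require Import Classical ClassicalEpsilon FunctionalExtensionality.
Import ListNotations.

Definition with_move {T : Type} (f : nat -> T) (t : nat) (x : T) : nat -> T :=
  fun i => if i <? t then f i else x.

Lemma with_move_hist {T : Type} (f : nat -> T) t x i : i < t -> with_move f t x i = f i.
Proof. intro Hi; unfold with_move; now rewrite (proj2 (Nat.ltb_lt _ _) Hi). Qed.

Lemma with_move_now {T : Type} (f : nat -> T) t x : with_move f t x t = x.
Proof. unfold with_move; now rewrite Nat.ltb_irrefl. Qed.

Section MarkingGame.
Variable V : Type.
Variable adj : V -> V -> Prop.

Lemma MV_ext (A A' : nat -> V) t :
  (forall i, i < t -> A i = A' i) -> forall v, MV A t v <-> MV A' t v.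
Proof.
  intros HAA' v; split; intros [i [Hi <-]]; exists i;
    split; [| symmetry | |]; auto.
Qed.

Lemma ME_ext (B B' : nat -> V * V) t :
  (forall i, i < t -> B i = B' i) -> forall x y, ME B t x y <-> ME B' t x y.
Proof.
  intros HBB' x y; split; intros [j [Hj Hxy]]; exists j;
    split; [| rewrite <- HBB' | | rewrite HBB']; auto.
Qed.

Lemma MV_S (A : nat -> V) t v : MV A (S t) v <-> MV A t v \/ A t = v.
Proof.
  split.
  - intros [i [Hi Hv]]; destruct (Nat.eq_dec i t) as [-> | Hne]; [now right |].
    left; exists i; split; [lia | exact Hv].
  - intros [[i [Hi Hv]] | Hv]; [exists i | exists t]; split; auto; lia.
Qed.

Lemma ME_S (B : nat -> V * V) t x y :
  ME B (S t) x y <-> ME B t x y \/ B t = (x, y) \/ B t = (y, x).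
Proof.
  split.
  - intros [j [Hj Hxy]]; destruct (Nat.eq_dec j t) as [-> | Hne]; [now right |].
    left; exists j; split; [lia | exact Hxy].
  - intros [[j [Hj Hxy]] | Hxy]; [exists j | exists t]; split; auto; lia.
Qed.

Lemma MV_mono (A : nat -> V) t t' v : t <= t' -> MV A t v -> MV A t' v.
Proof. intros Ht [i [Hi Hv]]; exists i; split; [lia | exact Hv]. Qed.

Lemma ME_sym (B : nat -> V * V) t x y : ME B t x y -> ME B t y x.
Proof. intros [j [Hj Hxy]]; exists j; split; [exact Hj | tauto]. Qed.

Lemma ME_0 (B : nat -> V * V) x y : ~ ME B 0 x y.
Proof. intros [j [Hj _]]; lia. Qed.

Lemma MV_with_move (A : nat -> V) t x v :
  MV (with_move A t x) (S t) v <-> MV A t v \/ x = v.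
Proof.
  rewrite MV_S, with_move_now, (MV_ext _ A t) by (intros; now apply with_move_hist).
  reflexivity.
Qed.

Lemma ME_with_move (B : nat -> V * V) t e x y :
  ME (with_move B t e) (S t) x y <-> ME B t x y \/ e = (x, y) \/ e = (y, x).
Proof.
  rewrite ME_S, with_move_now, (ME_ext _ B t) by (intros; now apply with_move_hist).
  reflexivity.
Qed.

Lemma alice_legal_ext (A A' : nat -> V) i :
  (forall j, j <= i -> A j = A' j) -> alice_legal A i -> alice_legal A' i.
Proof.
  unfold alice_legal; intros HAA' Hlegal Hmarked; apply Hlegal.
  rewrite HAA' by lia; rewrite (MV_ext A A' i) by (intros; apply HAA'; lia).
  exact Hmarked.
Qed.

Lemma bob_legal_ext (B B' : nat -> V * V) j :
  (forall i, i <= j -> B i = B' i) -> bob_legal adj B j -> bob_legal adj B' j.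
Proof.
  unfold bob_legal; intros HBB'.
  rewrite HBB' by lia; rewrite (ME_ext B B' j) by (intros; apply HBB'; lia).
  auto.
Qed.

Lemma alice_legal_with_move (A : nat -> V) r x :
  (forall i, i <= r -> alice_legal A i) -> ~ MV A (S r) x ->
  forall i, i <= S r -> alice_legal (with_move A (S r) x) i.
Proof.
  intros Hlegal Hx i Hi; destruct (Nat.eq_dec i (S r)) as [-> | Hne].
  - unfold alice_legal; rewrite with_move_now.
    rewrite (MV_ext _ A) by (intros; now apply with_move_hist).
    exact Hx.
  - apply (alice_legal_ext A); [intros j Hj; symmetry; apply with_move_hist; lia |].
    apply Hlegal; lia.
Qed.

Lemma bob_legal_with_move (B : nat -> V * V) r e :
  (forall j, j < r -> bob_legal adj B j) ->
  adj (fst e) (snd e) -> ~ ME B r (fst e) (snd e) ->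
  forall j, j < S r -> bob_legal adj (with_move B r e) j.
Proof.
  intros Hlegal He He' j Hj; destruct (Nat.eq_dec j r) as [-> | Hne].
  - unfold bob_legal; rewrite with_move_now.
    rewrite (ME_ext _ B) by (intros; now apply with_move_hist).
    now split.
  - apply (bob_legal_ext B); [intros i Hi; symmetry; apply with_move_hist; lia |].
    apply Hlegal; lia.
Qed.

Lemma play_A_hist r (pa c : nat -> V) i : i <= r -> play_A r pa c i = pa i.
Proof. intro Hi; unfold play_A; now rewrite (proj2 (Nat.leb_le _ _) Hi). Qed.

Lemma play_A_next r (pa c : nat -> V) : play_A r pa c (S r) = c 0.
Proof.
  unfold play_A; rewrite (proj2 (Nat.leb_gt (S r) r)) by lia.
  now rewrite Nat.sub_diag.
Qed.

Lemma play_B_first r (pb : nat -> V * V) sigma (c : nat -> V) j :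
  j <= r -> play_B r pb sigma c j = with_move pb r (sigma []) j.
Proof.
  intro Hj; unfold play_B, with_move; destruct (Nat.ltb_spec j r); [reflexivity |].
  now replace (j - r) with 0 by lia.
Qed.

Lemma play_A_shift r (pa c : nat -> V) :
  play_A r pa c = play_A (S r) (with_move pa (S r) (c 0)) (fun i => c (S i)).
Proof.
  apply functional_extensionality; intro t; unfold play_A, with_move.
  destruct (Nat.leb_spec t r), (Nat.leb_spec t (S r)), (Nat.ltb_spec t (S r));
    try lia; try reflexivity.
  - now replace (t - S r) with 0 by lia.
  - f_equal; lia.
Qed.

Lemma play_B_shift r (pb : nat -> V * V) sigma (c : nat -> V) :
  play_B r pb sigma c =
  play_B (S r) (with_move pb r (sigma [])) (fun l => sigma (c 0 :: l)) (fun i => c (S i)).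
Proof.
  apply functional_extensionality; intro t; unfold play_B, with_move.
  destruct (Nat.ltb_spec t r), (Nat.ltb_spec t (S r)); try lia; try reflexivity.
  - now replace (t - r) with 0 by lia.
  - replace (t - r) with (S (t - S r)) by lia; simpl.
    now rewrite <- seq_shift, map_map.
Qed.

Definition bob_forces (m r : nat) (pa : nat -> V) (pb : nat -> V * V) : Prop :=
  exists sigma : list V -> V * V,
    forall c : nat -> V, final_score_ge adj (play_A r pa c) (play_B r pb sigma c) m.

Section Position.
Variables (r : nat) (pa : nat -> V) (pb : nat -> V * V).
Hypothesis pa_legal : forall i, i <= r -> alice_legal pa i.
Hypothesis pb_legal : forall j, j < r -> bob_legal adj pb j.

Lemma play_legal_through_r (sigma : list V -> V * V) c :
  adj (fst (sigma [])) (snd (sigma [])) -> ~ ME pb r (fst (sigma [])) (snd (sigma [])) ->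
  (forall i, i <= r -> alice_legal (play_A r pa c) i) /\
  (forall j, j <= r -> bob_legal adj (play_B r pb sigma c) j).
Proof.
  intros He He'; split.
  - intros i Hi; apply (alice_legal_ext pa); [| now apply pa_legal].
    intros j Hj; symmetry; apply play_A_hist; lia.
  - intros j Hj; apply (bob_legal_ext (with_move pb r (sigma []))).
    + intros i Hi; symmetry; apply play_B_first; lia.
    + apply bob_legal_with_move; auto; lia.
Qed.

Lemma final_score_ge_early m (sigma : list V -> V * V) c k :
  k < r -> score_ge (MV pa (S k)) (ME pb (S k)) m ->
  final_score_ge adj (play_A r pa c) (play_B r pb sigma c) m.
Proof.
  intros Hk Hscore; exists k; split; [| split].
  - intros i Hi; apply (alice_legal_ext pa); [| apply pa_legal; lia].
    intros j Hj; symmetry; apply play_A_hist; lia.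
  - intros j Hj; apply (bob_legal_ext pb); [| apply pb_legal; lia].
    intros i Hi; rewrite play_B_first, with_move_hist by lia; reflexivity.
  - left; destruct Hscore as [v [Hv Hedges]]; exists v; split.
    + rewrite (MV_ext _ pa) by (intros; apply play_A_hist; lia); exact Hv.
    + destruct Hedges as [l [Hnodup [Hlen Hall]]]; exists l; split; [| split]; auto.
      eapply Forall_impl; [| exact Hall]; intros u Hu.
      rewrite (ME_ext _ pb) by (intros; rewrite play_B_first, with_move_hist by lia; auto).
      exact Hu.
Qed.

Lemma final_score_ge_now m (sigma : list V -> V * V) c :
  adj (fst (sigma [])) (snd (sigma [])) -> ~ ME pb r (fst (sigma [])) (snd (sigma [])) ->
  score_ge (MV pa (S r)) (ME (with_move pb r (sigma [])) (S r)) m ->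
  final_score_ge adj (play_A r pa c) (play_B r pb sigma c) m.
Proof.
  intros He He' [v [Hv [l [Hnodup [Hlen Hall]]]]].
  destruct (play_legal_through_r sigma c He He') as [Halice Hbob].
  exists r; split; [exact Halice | split; [exact Hbob |]].
  left; exists v; split.
  - rewrite (MV_ext _ pa) by (intros; apply play_A_hist; lia); exact Hv.
  - exists l; split; [| split]; auto.
    eapply Forall_impl; [| exact Hall]; intros u Hu.
    rewrite (ME_ext _ (with_move pb r (sigma []))) by (intros; apply play_B_first; lia).
    exact Hu.
Qed.

Lemma final_score_ge_illegal m (sigma : list V -> V * V) c w :
  adj (fst (sigma [])) (snd (sigma [])) -> ~ ME pb r (fst (sigma [])) (snd (sigma [])) ->
  ~ MV pa (S r) w -> MV pa (S r) (c 0) ->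
  final_score_ge adj (play_A r pa c) (play_B r pb sigma c) m.
Proof.
  intros He He' Hw Hc.
  destruct (play_legal_through_r sigma c He He') as [Halice Hbob].
  assert (Hhist : forall v, MV (play_A r pa c) (S r) v <-> MV pa (S r) v)
    by (apply MV_ext; intros; apply play_A_hist; lia).
  exists r; split; [exact Halice | split; [exact Hbob |]].
  right; split.
  - unfold alice_legal; rewrite play_A_next, Hhist; tauto.
  - exists w; now rewrite Hhist.
Qed.

Lemma bob_forces_step m e w :
  adj (fst e) (snd e) -> ~ ME pb r (fst e) (snd e) -> ~ MV pa (S r) w ->
  (forall x, ~ MV pa (S r) x ->
     bob_forces m (S r) (with_move pa (S r) x) (with_move pb r e)) ->
  bob_forces m r pa pb.
Proof.
  intros He He' Hw Hreplies.
  destruct (choice (fun x tau => ~ MV pa (S r) x ->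
      forall c, final_score_ge adj (play_A (S r) (with_move pa (S r) x) c)
                                   (play_B (S r) (with_move pb r e) tau c) m))
    as [tau Htau].
  { intros x; destruct (classic (MV pa (S r) x)) as [Hx | Hx].
    - exists (fun _ => e); tauto.
    - destruct (Hreplies x Hx) as [tau Htau]; exists tau; auto. }
  exists (fun l => match l with [] => e | x :: l' => tau x l' end); intros c.
  destruct (classic (MV pa (S r) (c 0))) as [Hc | Hc].
  - exact (final_score_ge_illegal m _ c w He He' Hw Hc).
  - rewrite play_A_shift, play_B_shift; exact (Htau (c 0) Hc _).
Qed.

Lemma bob_forces_at_vertex m w M N :
  ~ MV pa (S r) w ->
  NoDup M -> length M = m -> Forall (ME pb r w) M ->
  NoDup N -> length N = S m -> Forall (adj w) N ->
  bob_forces (S m) r pa pb.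
Proof.
  intros Hw HM HMlen HMmarked HN HNlen HNadj.
  destruct (classic (exists u, In u N /\ ~ ME pb r w u)) as [[u [Hu Hwu]] | Hall].
  - exists (fun _ => (w, u)); intros c; apply final_score_ge_now; simpl.
    + now apply (proj1 (Forall_forall _ N) HNadj).
    + exact Hwu.
    + exists w; split; [exact Hw |]; exists (u :: M); split; [| split].
      * constructor; [| exact HM].
        intro HuM; apply Hwu; exact (proj1 (Forall_forall _ M) HMmarked u HuM).
      * simpl; congruence.
      * constructor; [apply ME_with_move; tauto |].
        eapply Forall_impl; [| exact HMmarked]; intros v Hv; apply ME_with_move; tauto.
  - (* every edge from w to N is already marked: the score was reached a round ago *)
    assert (HNmarked : forall u, In u N -> ME pb r w u)
      by (intros u Hu; apply NNPP; intro Hwu; apply Hall; eauto).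
    destruct N as [| u N']; [discriminate |].
    assert (Hr : r <> 0).
    { intros ->; apply (ME_0 pb w u), HNmarked; left; reflexivity. }
    exists (fun _ => (w, w)); intros c; apply (final_score_ge_early _ _ _ (r - 1)); [lia |].
    replace (S (r - 1)) with r by lia.
    exists w; split.
    { intro Hmarked; apply Hw; exact (MV_mono pa r (S r) w (Nat.le_succ_diag_r r) Hmarked). }
    exists (u :: N'); split; [| split]; auto.
    apply Forall_forall; exact HNmarked.
Qed.
End Position.

(* The body of [n_free_path], so that [n_free_path adj mv me n] unfolds to
   [exists p k, free_path mv me n p k]. *)
Definition free_path (mv : V -> Prop) (me : V -> V -> Prop) (n : nat)
  (p : nat -> V) (k : nat) : Prop :=
  2 <= k /\
  (forall i j, i <= k -> j <= k -> p i = p j -> i = j) /\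
  (forall i, i < k -> adj (p i) (p (S i))) /\
  me (p 0) (p 1) /\ me (p (k - 1)) (p k) /\
  (forall i, 0 < i < k ->
     ~ mv (p i) /\
     (exists l : list V, NoDup l /\ length l = S n /\
        Forall (fun u => adj (p i) u /\ u <> p (i - 1) /\ u <> p (S i)) l) /\
     (exists l : list V, NoDup l /\ length l = n /\
        Forall (fun u => adj (p i) u /\ me (p i) u /\ u <> p (i - 1) /\ u <> p (S i)) l)).

Lemma free_path_first_vertex (adj_sym : forall x y, adj x y -> adj y x)
  (mv : V -> Prop) (me : V -> V -> Prop) (me_sym : forall x y, me x y -> me y x) n p k :
  free_path mv me n p k ->
  ~ mv (p 1) /\
  exists M N, NoDup (p 2 :: M) /\ length M = S n /\ Forall (me (p 1)) M /\
              NoDup N /\ length N = S (S (S n)) /\ Forall (adj (p 1)) N.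
Proof.
  intros (Hk & Hinj & Hadj & Hfirst & _ & Hinner).
  destruct (Hinner 1 ltac:(lia))
    as (Hunmarked & (Loff & HLoff & HLofflen & HLoffall) & (Lm & HLm & HLmlen & HLmall)).
  simpl in HLoffall, HLmall.
  assert (Hp02 : p 0 <> p 2) by (intro E; apply Hinj in E; lia).
  split; [exact Hunmarked |].
  exists (p 0 :: Lm), (p 0 :: p 2 :: Loff); repeat split.
  - rewrite Forall_forall in HLmall.
    constructor; [| constructor; [| exact HLm]].
    + intros [E | Hin]; [congruence | apply HLmall in Hin; tauto].
    + intros Hin; apply HLmall in Hin; tauto.
  - simpl; congruence.
  - constructor; [now apply me_sym |].
    eapply Forall_impl; [| exact HLmall]; simpl; tauto.
  - rewrite Forall_forall in HLoffall.
    constructor; [| constructor; [| exact HLoff]].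
    + intros [E | Hin]; [congruence | apply HLoffall in Hin; tauto].
    + intros Hin; apply HLoffall in Hin; tauto.
  - simpl; congruence.
  - constructor; [apply adj_sym, Hadj; lia |].
    constructor; [apply Hadj; lia |].
    eapply Forall_impl; [| exact HLoffall]; simpl; tauto.
Qed.

Lemma free_path_length_ge3 mv me n p k :
  free_path mv me n p k -> ~ me (p 1) (p 2) -> 3 <= k.
Proof.
  intros (Hk & _ & _ & _ & Hlast & _) H12.
  destruct (Nat.eq_dec k 2) as [-> | Hne]; [contradiction | lia].
Qed.

Lemma free_path_tail mv me mv' me' n p k :
  free_path mv me n p (S k) -> 2 <= k ->
  (forall v, mv' v -> mv v \/ v = p 1) -> (forall x y, me x y -> me' x y) ->
  me' (p 1) (p 2) ->
  free_path mv' me' n (fun i => p (S i)) k.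
Proof.
  intros (_ & Hinj & Hadj & _ & Hlast & Hinner) Hk Hmv Hme H12.
  split; [exact Hk |]; split; [| split; [| split; [exact H12 | split]]].
  - intros i j Hi Hj E; apply Hinj in E; lia.
  - intros i Hi; apply Hadj; lia.
  - replace (S (k - 1)) with (S k - 1) by lia; auto.
  - intros j Hj; cbv beta.
    destruct (Hinner (S j) ltac:(lia)) as (Hunmarked & Hoff & Lm & HLm & HLmlen & HLmall).
    replace (S (j - 1)) with (S j - 1) by lia; split; [| split; [exact Hoff |]].
    + intros Hmarked; destruct (Hmv _ Hmarked) as [? | E]; [contradiction |].
      apply Hinj in E; lia.
    + exists Lm; split; [| split]; auto.
      eapply Forall_impl; [| exact HLmall]; intros u Hu; simpl in Hu |- *; intuition.
Qed.

Lemma bob_forces_of_free_path (adj_sym : forall x y, adj x y -> adj y x) n k :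
  forall r pa pb p,
  (forall i, i <= r -> alice_legal pa i) -> (forall j, j < r -> bob_legal adj pb j) ->
  free_path (MV pa (S r)) (ME pb r) n p k ->
  bob_forces (n + 3) r pa pb.
Proof.
  induction k as [| k IH]; intros r pa pb p Hpa Hpb Hpath; [destruct Hpath; lia |].
  destruct (free_path_first_vertex adj_sym _ _ (ME_sym pb r) _ _ _ Hpath)
    as (Hp1 & M & N & HM & HMlen & HMmarked & HN & HNlen & HNadj).
  replace (n + 3) with (S (S (S n))) by lia.
  destruct (classic (ME pb r (p 1) (p 2))) as [H12 | H12].
  { apply (bob_forces_at_vertex r pa pb Hpa Hpb _ (p 1) (p 2 :: M) N); simpl; auto. }
  assert (Hk : 2 <= k) by (apply (free_path_length_ge3 _ _ _ _ _ Hpath) in H12; lia).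
  assert (Hadj12 : adj (p 1) (p 2)) by (destruct Hpath as (_ & _ & Hadj & _); apply Hadj; lia).
  apply (bob_forces_step r pa pb Hpa Hpb _ (p 1, p 2) (p 1)); auto.
  intros x Hx.
  pose proof (alice_legal_with_move pa r x Hpa Hx) as Hpa'.
  pose proof (bob_legal_with_move pb r (p 1, p 2) Hpb Hadj12 H12) as Hpb'.
  destruct (classic (x = p 1)) as [-> | Hx1].
  - replace (S (S (S n))) with (n + 3) by lia.
    apply (IH _ _ _ (fun i => p (S i)) Hpa' Hpb').
    apply (free_path_tail _ _ _ _ _ _ _ Hpath Hk).
    + intros v Hv; apply MV_with_move in Hv; intuition.
    + intros u v Huv; apply ME_with_move; auto.
    + apply ME_with_move; auto.
  - apply (bob_forces_at_vertex _ _ _ Hpa' Hpb' _ (p 1) (p 2 :: M) N); simpl; auto.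
    + rewrite MV_with_move; tauto.
    + constructor; [apply ME_with_move; auto |].
      eapply Forall_impl; [| exact HMmarked]; intros u Hu; apply ME_with_move; auto.
Qed.
End MarkingGame.

Theorem theorem5p2 (V : Type) (adj : V -> V -> Prop)
  (adj_sym : forall x y, adj x y -> adj y x)
  (adj_irrefl : forall x, ~ adj x x)
  (n r : nat) (pa : nat -> V) (pb : nat -> V * V) :
  (forall i, i <= r -> alice_legal pa i) ->
  (forall j, j < r -> bob_legal adj pb j) ->
  n_free_path adj (MV pa (S r)) (ME pb r) n ->
  exists sigma : list V -> V * V,
    forall c : nat -> V,
      final_score_ge adj (play_A r pa c) (play_B r pb sigma c) (n + 3).
Proof.
  intros Hpa Hpb [p [k Hpath]].
  exact (bob_forces_of_free_path V adj adj_sym n k r pa pb p Hpa Hpb Hpath).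
Qed.
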